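(* Let the multiplicity sequence $\Lambda=\{\lambda_n,\mu_n\}_{n=1}^{\infty}$ be an interpolating variety for $A^0_{|z|}$. Then for every $\epsilon>0$ there is a constant $m_\epsilon>0$, independent of $n$, such that \[ \inf_{k\ne n}|\lambda_n-\lambda_k|\ge m_\epsilon\exp\Big\{-\frac{\epsilon|\lambda_n|}{\mu_n}\Big\}\qquad\text{for all } n\in\mathbb{N}. \]
   Context: A multiplicity sequence $\Lambda=\{\lambda_n,\mu_n\}_{n=1}^\infty$ consists of distinct nonzero complex numbers $\lambda_n$ with $|\lambda_n|\to\infty$, $|\lambda_n|\le|\lambda_{n+1}|$, and positive integers $\mu_n$. $A^0_{|z|}$ is the space of entire functions $F$ with: for every $\epsilon>0$ there is $M_\epsilon$ with $|F(z)|\le M_\epsilon e^{\epsilon|z|}$ on $\mathbb{C}$. $\Lambda$ is an interpolating variety for $A^0_{|z|}$ if for every doubly indexed complex sequence $(a_{n,k})_{n\in\mathbb{N},0\le k\le\mu_n-1}$ with $\sup_n\sum_{k}|a_{n,k}|e^{-\epsilon|\lambda_n|}<\infty$ for every $\epsilon>0$ there is $f\in A^0_{|z|}$ with $f^{(k)}(\lambda_n)/k!=a_{n,k}$ for all $n,k$. *)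

From Stdlib Require Import Reals Lra.
From Coquelicot Require Import Coquelicot.
Open Scope R_scope.

(* Sequences are indexed from 0 instead of 1 (lambda 0 = lambda_1 of the paper). *)

Definition entire (F : C -> C) : Prop :=
  forall z : C, @ex_derive C_AbsRing C_NormedModule F z.

Definition cderivs (F : C -> C) (D : nat -> C -> C) : Prop :=
  D 0%nat = F /\
  forall (k : nat) (z : C), @is_derive C_AbsRing C_NormedModule (D k) z (D (S k) z).

Definition A0 (F : C -> C) : Prop :=
  entire F /\
  forall eps : R, 0 < eps -> exists M : R, forall z : C, Cmod (F z) <= M * exp (eps * Cmod z).

Definition multiplicity_sequence (lam : nat -> C) (mu : nat -> nat) : Prop :=
  (forall n m, n <> m -> lam n <> lam m) /\
  (forall n, lam n <> 0%C) /\
  (forall M : R, exists N : nat, forall n, (N <= n)%nat -> M < Cmod (lam n)) /\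
  (forall n, Cmod (lam n) <= Cmod (lam (S n))) /\
  (forall n, (1 <= mu n)%nat).

Definition admissible_data (lam : nat -> C) (mu : nat -> nat) (a : nat -> nat -> C) : Prop :=
  forall eps : R, 0 < eps -> exists B : R, forall n : nat,
    sum_f_R0 (fun k => Cmod (a n k)) (pred (mu n)) * exp (- eps * Cmod (lam n)) <= B.

Definition interpolating_variety (lam : nat -> C) (mu : nat -> nat) : Prop :=
  forall a : nat -> nat -> C, admissible_data lam mu a ->
    exists f : C -> C, A0 f /\
      exists D : nat -> C -> C, cderivs f D /\
        forall n k : nat, (k < mu n)%nat ->
          Cdiv (D k (lam n)) (RtoC (INR (Factorial.fact k))) = a n k.

From Stdlib Require Import Reals Lra Lia Factorial List Classical ClassicalEpsilon.
From Coquelicot Require Import Coquelicot.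
Open Scope R_scope.

(* Suppose the separation fails for some eps.  Then there are pairs (n_j, k_j) with
   |lam (n_j)| -> oo, |lam (n_j) - lam (k_j)| < exp (- eps |lam (n_j)| / mu (n_j)) / (j + 1),
   and no n_i equal to any k_j.  Interpolating the value 1 at every lam (k_j) and 0 for all
   other data gives f in A^0 with f (lam (k_j)) = 1 and a zero of order mu (n_j) at lam (n_j).
   A Schwarz lemma on the unit square centred at a = lam (n_j), namely
   |f b| <= max_{boundary} |f| * |b - a|^mu, combined with |f z| <= M exp (eps |z|), then
   yields 1 <= M exp (2 eps) / (j + 1), which fails for large j.
   The Schwarz lemma is the maximum modulus principle for f / (z - a)^mu, proved without
   integration: a function with second-order complex expansions at every point has a
   discrete Laplacian of size O(h^3), so Re (c w) + d |z - a|^2 (d > 0) has no interior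
   maximum. *)

Lemma Cminus_neq_0 (z a : C) : z <> a -> (z - a)%C <> 0%C.
Proof.
  intros Hza E. apply Hza.
  replace z with (z - a + a)%C by (apply injective_projections; simpl; ring).
  rewrite E. apply injective_projections; simpl; ring.
Qed.

Lemma Cmod_sub_ge (x y : C) : Cmod x - Cmod y <= Cmod (x - y).
Proof.
  pose proof (Cmod_triangle (x - y)%C y).
  replace (x - y + y)%C with x in H by (apply injective_projections; simpl; ring). lra.
Qed.

Lemma Cmod_Ci_mult (h : C) : Cmod (Ci * h) = Cmod h.
Proof. unfold Cmod, Ci. destruct h. simpl. f_equal. ring. Qed.

Lemma Cmod_RtoC_mult (u : R) (h : C) : Cmod (RtoC u * h)%C = Rabs u * Cmod h.
Proof. now rewrite Cmod_mult, Cmod_R. Qed.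

Lemma Cmod_sqr (z : C) : Cmod z ^ 2 = Re z ^ 2 + Im z ^ 2.
Proof.
  unfold Cmod. rewrite pow2_sqrt; [reflexivity|].
  pose proof (pow2_ge_0 (fst z)). pose proof (pow2_ge_0 (snd z)). lra.
Qed.

Lemma RtoC_INR_fact_neq_0 (n : nat) : RtoC (INR (fact n)) <> 0%C.
Proof.
  intro E. apply (f_equal fst) in E. simpl in E.
  pose proof (lt_0_INR _ (lt_O_fact n)). lra.
Qed.

Lemma inv_INR_S_bounds (j : nat) : 0 < / INR (S j) <= 1.
Proof.
  split; [apply Rinv_0_lt_compat, lt_0_INR; lia|]. rewrite <- Rinv_1.
  apply Rinv_le_contravar; [lra|]. rewrite S_INR. pose proof (pos_INR j). lra.
Qed.

Lemma exp_le_compat (x y : R) : x <= y -> exp x <= exp y.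
Proof. intros [Hlt|Heq]; [left; now apply exp_increasing | rewrite Heq; apply Rle_refl]. Qed.

(** * Complex derivatives *)

Definition is_Cderive (f : C -> C) (z l : C) : Prop :=
  @is_derive C_AbsRing C_NormedModule f z l.

(* Coquelicot's rules for products and compositions are stated for C viewed as
   AbsRing_NormedModule C_AbsRing, whereas [cderivs] uses C_NormedModule. *)
Lemma is_Cderive_AbsRing (f : C -> C) (z l : C) :
  @is_derive C_AbsRing (AbsRing_NormedModule C_AbsRing) f z l <-> is_Cderive f z l.
Proof.
  split; intros [_ Hd]; split; try exact Hd.
  - apply (@is_linear_scal_l C_AbsRing C_NormedModule).
  - apply (@is_linear_scal_l C_AbsRing).
Qed.

Lemma is_Cderive_ext_value (f : C -> C) (z l l' : C) :
  l = l' -> is_Cderive f z l -> is_Cderive f z l'.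
Proof. now intros ->. Qed.

Lemma is_Cderive_const (k z : C) : is_Cderive (fun _ => k) z 0%C.
Proof. apply (@is_derive_const C_AbsRing C_NormedModule). Qed.

Lemma is_Cderive_id (z : C) : is_Cderive (fun t => t) z 1%C.
Proof. apply is_Cderive_AbsRing, (@is_derive_id C_AbsRing). Qed.

Lemma is_Cderive_mult (f g : C -> C) (z df dg : C) :
  is_Cderive f z df -> is_Cderive g z dg ->
  is_Cderive (fun t => f t * g t)%C z (df * g z + f z * dg)%C.
Proof.
  intros Hf Hg; apply is_Cderive_AbsRing.
  apply (@is_derive_mult C_AbsRing); try apply is_Cderive_AbsRing; auto.
  intros; apply Cmult_comm.
Qed.

Lemma is_Cderive_comp_affine (G : C -> C) (a h z l : C) :
  is_Cderive G (a + z * h)%C l -> is_Cderive (fun t => G (a + t * h)%C) z (h * l)%C.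
Proof.
  intro HG.
  assert (Haff : @is_derive C_AbsRing (AbsRing_NormedModule C_AbsRing)
                   (fun t => a + t * h)%C z h).
  { apply is_Cderive_AbsRing, (is_Cderive_ext_value _ _ (0 + (1 * h + z * 0))%C).
    - now rewrite Cmult_0_r, Cplus_0_r, Cplus_0_l, Cmult_1_l.
    - apply (@is_derive_plus C_AbsRing C_NormedModule).
      + apply is_Cderive_const.
      + apply is_Cderive_mult; [apply is_Cderive_id | apply is_Cderive_const]. }
  exact (@is_derive_comp C_AbsRing C_NormedModule G _ z l h HG Haff).
Qed.

Definition near0 (P : C -> Prop) : Prop :=
  exists r, 0 < r /\ forall h, Cmod h < r -> P h.

Lemma near0_and (P Q : C -> Prop) : near0 P -> near0 Q -> near0 (fun h => P h /\ Q h).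
Proof.
  intros [r [Hr HP]] [r' [Hr' HQ]]. exists (Rmin r r'). split; [now apply Rmin_pos|].
  intros h Hh. split; [apply HP | apply HQ];
    eapply Rlt_le_trans; eauto; [apply Rmin_l | apply Rmin_r].
Qed.

Lemma near0_impl (P Q : C -> Prop) : (forall h, P h -> Q h) -> near0 P -> near0 Q.
Proof. intros HPQ [r [Hr HP]]. exists r. split; auto. Qed.

Lemma near0_and_impl (P Q S : C -> Prop) :
  near0 P -> near0 Q -> (forall h, P h -> Q h -> S h) -> near0 S.
Proof.
  intros HP HQ HS. apply (near0_impl (fun h => P h /\ Q h)); [|now apply near0_and].
  intros h [? ?]; auto.
Qed.

Lemma near0_true (P : C -> Prop) : (forall h, P h) -> near0 P.
Proof. intro HP. exists 1. split; [lra | auto]. Qed.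

Lemma near0_Cmod_lt (r : R) : 0 < r -> near0 (fun h => Cmod h < r).
Proof. intro Hr. now exists r. Qed.

Lemma is_Cderive_approx (G : C -> C) (z l : C) (eps : R) :
  is_Cderive G z l -> 0 < eps ->
  near0 (fun h => Cmod (G (z + h) - G z - h * l)%C <= eps * Cmod h).
Proof.
  intros [_ Hdom] Heps.
  destruct (Hdom z (fun P HP => HP) (mkposreal eps Heps)) as [d Hd].
  exists d. split; [apply cond_pos|]. intros h Hh.
  assert (Hball : @ball (AbsRing_UniformSpace C_AbsRing) z d (z + h)%C).
  { change (Cmod (z + h - z)%C < d).
    now replace (z + h - z)%C with h by (apply injective_projections; simpl; ring). }
  specialize (Hd _ Hball).
  change (Cmod (G (z + h) - G z - (z + h - z) * l)%C <= eps * Cmod (z + h - z)%C) in Hd.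
  now replace (z + h - z)%C with h in Hd by (apply injective_projections; simpl; ring).
Qed.

(* The increment is real, so taking real parts commutes with the linear approximation. *)
Lemma is_derive_Re_of_Cderive (F : C -> C) (s : R) (L : C) :
  is_Cderive F (RtoC s) L -> is_derive (fun t : R => Re (F (RtoC t))) s (Re L).
Proof.
  intro HF. apply is_derive_Reals. intros eps Heps.
  destruct (is_Cderive_approx F s L (eps / 2) HF ltac:(lra)) as [d [Hd Happrox]].
  exists (mkposreal d Hd). intros u Hu0 Hu.
  specialize (Happrox (RtoC u)). rewrite Cmod_R in Happrox. specialize (Happrox Hu).
  replace (RtoC s + RtoC u)%C with (RtoC (s + u)) in Happrox
    by (apply injective_projections; simpl; ring).
  assert (Hu' : 0 < Rabs u) by (apply Rabs_pos_lt; exact Hu0).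
  replace ((Re (F (RtoC (s + u))) - Re (F (RtoC s))) / u - Re L)
    with (Re (F (RtoC (s + u)) - F s - RtoC u * L)%C / u)
    by (unfold Re; simpl; field; exact Hu0).
  unfold Rdiv. rewrite Rabs_mult, Rabs_inv.
  apply Rmult_lt_reg_r with (Rabs u); [exact Hu'|].
  rewrite Rmult_assoc, Rinv_l, Rmult_1_r by lra.
  pose proof (re_le_Cmod (F (RtoC (s + u)) - F s - RtoC u * L)%C). nra.
Qed.

Lemma is_Cderive_bounded_near (G : C -> C) (z l : C) :
  is_Cderive G z l -> near0 (fun h => Cmod (G (z + h)%C) <= Cmod (G z) + 1).
Proof.
  intro HG.
  apply (near0_impl (fun h => Cmod (G (z + h) - G z - h * l)%C <= 1 * Cmod h
                              /\ Cmod h < / (Cmod l + 1))).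
  - intros h [Happrox Hh].
    replace (G (z + h)%C) with (G z + (G (z + h) - G z - h * l) + h * l)%C
      by (apply injective_projections; simpl; ring).
    pose proof (Cmod_triangle (G z + (G (z + h) - G z - h * l))%C (h * l)%C).
    pose proof (Cmod_triangle (G z) (G (z + h) - G z - h * l)%C).
    rewrite Cmod_mult in *. pose proof (Cmod_ge_0 l). pose proof (Cmod_ge_0 h).
    assert (Cmod h * (Cmod l + 1) < 1).
    { apply Rmult_lt_compat_r with (r := Cmod l + 1) in Hh; [|lra].
      now rewrite Rinv_l in Hh by lra. }
    nra.
  - apply near0_and; [apply (is_Cderive_approx _ _ _ 1 HG); lra|].
    apply near0_Cmod_lt, Rinv_0_lt_compat. pose proof (Cmod_ge_0 l). lra.
Qed.

Lemma increment_le_of_derive_le (r phi dr dphi : R -> R) :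
  (forall s, is_derive r s (dr s)) -> (forall s, is_derive phi s (dphi s)) ->
  (forall s, 0 <= s <= 1 -> dr s <= dphi s) -> r 1 - r 0 <= phi 1 - phi 0.
Proof.
  intros Hr Hphi Hle.
  assert (Hd : forall s, is_derive (fun s => r s - phi s) s (dr s - dphi s))
    by (intro s; apply (@is_derive_minus R_AbsRing R_NormedModule); auto).
  destruct (MVT_gen (fun s => r s - phi s) 0 1 (fun s => dr s - dphi s)) as [x [Hx Heq]].
  - intros; apply Hd.
  - intros x _. apply continuity_pt_filterlim, (ex_derive_continuous (fun s => r s - phi s)).
    eexists; apply Hd.
  - rewrite Rmin_left, Rmax_right in Hx by lra.
    specialize (Hle x Hx). nra.
Qed.

(* With E = G (a + h) - G a, the function s |-> Re (conj E * G (a + s h)) increases by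
   |E|^2 on [0, 1], at a rate at most |E| * dphi. *)
Lemma Cmean_value_inequality (G dG : C -> C) (a h : C) (phi dphi : R -> R) :
  (forall z, is_Cderive G z (dG z)) -> (forall s, is_derive phi s (dphi s)) ->
  (forall s, 0 <= s <= 1 -> Cmod h * Cmod (dG (a + RtoC s * h)%C) <= dphi s) ->
  Cmod (G (a + h) - G a)%C <= phi 1 - phi 0.
Proof.
  intros HG Hphi Hbound.
  set (E := (G (a + h) - G a)%C).
  assert (Hr : forall s, is_derive (fun s => Re (Cconj E * G (a + RtoC s * h))%C) s
                           (Re (Cconj E * (h * dG (a + RtoC s * h)))%C)).
  { intro s. apply (is_derive_Re_of_Cderive (fun t => Cconj E * G (a + t * h))%C).
    apply (is_Cderive_ext_value _ _
      (0 * G (a + RtoC s * h)%C + Cconj E * (h * dG (a + RtoC s * h)%C))%C);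
      [now rewrite Cmult_0_l, Cplus_0_l|].
    apply (is_Cderive_mult (fun _ => Cconj E) (fun t => G (a + t * h)%C));
      [apply is_Cderive_const | apply is_Cderive_comp_affine, HG]. }
  assert (Hle : forall s, 0 <= s <= 1 ->
                Re (Cconj E * (h * dG (a + RtoC s * h)))%C <= Cmod E * dphi s).
  { intros s Hs. eapply Rle_trans; [apply Rle_abs|]. eapply Rle_trans; [apply re_le_Cmod|].
    rewrite !Cmod_mult, Cmod_conj, <- Rmult_assoc, (Rmult_assoc (Cmod E)).
    apply Rmult_le_compat_l; [apply Cmod_ge_0 | now apply Hbound]. }
  assert (Hphi0 : 0 <= phi 1 - phi 0).
  { replace 0 with ((fun _ : R => 0) 1 - (fun _ : R => 0) 0) at 1 by ring.
    apply (increment_le_of_derive_le _ _ (fun _ => 0) _ (fun s => is_derive_const 0 s) Hphi).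
    intros s Hs. eapply Rle_trans; [|now apply Hbound].
    apply Rmult_le_pos; apply Cmod_ge_0. }
  pose proof (increment_le_of_derive_le _ (fun s => Cmod E * phi s) _ (fun s => Cmod E * dphi s)
                Hr (fun s => is_derive_scal _ _ _ _ (Hphi s)) Hle) as Hincr.
  cbv beta in Hincr.
  replace (a + RtoC 1 * h)%C with (a + h)%C in Hincr
    by (apply injective_projections; simpl; ring).
  replace (a + RtoC 0 * h)%C with a in Hincr by (apply injective_projections; simpl; ring).
  replace (Re (Cconj E * G (a + h)%C) - Re (Cconj E * G a)) with (Re (Cconj E * E))
    in Hincr by (unfold E; simpl; ring).
  rewrite Cmult_comm, <- Cmod2_conj in Hincr. simpl in Hincr.
  pose proof (Cmod_ge_0 E). nra.
Qed.

(** * Taylor's formula *)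

Lemma is_Cderive_Cpow (a z : C) (n : nat) :
  is_Cderive (fun t => Cpow (t - a) (S n)) z (INR (S n) * Cpow (z - a) n)%C.
Proof.
  induction n as [|n IH].
  - apply (is_Cderive_ext_value _ _ (1 * 1 + (z - a) * 0)%C).
    + rewrite Cmult_0_r, Cplus_0_r. simpl. now rewrite Cmult_1_r.
    + apply (is_Cderive_mult (fun t => t - a)%C (fun _ => 1%C)); [|apply is_Cderive_const].
      apply (is_Cderive_ext_value _ _ (1 - 0)%C); [apply injective_projections; simpl; ring|].
      apply (@is_derive_minus C_AbsRing C_NormedModule);
        [apply is_Cderive_id | apply is_Cderive_const].
  - apply (is_Cderive_ext_value _ _
             ((1 - 0) * Cpow (z - a) (S n) + (z - a) * (INR (S n) * Cpow (z - a) n))%C).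
    + rewrite !S_INR. simpl. apply injective_projections; simpl; ring.
    + apply (is_Cderive_mult (fun t => t - a)%C (fun t => Cpow (t - a) (S n))); [|exact IH].
      apply (@is_derive_minus C_AbsRing C_NormedModule);
        [apply is_Cderive_id | apply is_Cderive_const].
Qed.

Definition taylor_term (a : C) (n : nat) (z : C) : C := (Cpow (z - a) n / INR (fact n))%C.

Fixpoint taylor_poly (D : nat -> C -> C) (a : C) (N : nat) (z : C) : C :=
  match N with
  | O => 0%C
  | S M => (taylor_poly D a M z + D M a * taylor_term a M z)%C
  end.

Lemma is_Cderive_taylor_term (a z : C) (n : nat) :
  is_Cderive (taylor_term a (S n)) z (taylor_term a n z).
Proof.
  unfold taylor_term.
  apply (is_Cderive_ext_value _ _
           (INR (S n) * Cpow (z - a) n * / INR (fact (S n)) + Cpow (z - a) (S n) * 0)%C).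
  - assert (HS : RtoC (INR (S n)) <> 0%C)
      by (intro E; apply (f_equal fst) in E; revert E; apply not_0_INR; lia).
    pose proof (RtoC_INR_fact_neq_0 n).
    rewrite fact_simpl, mult_INR, RtoC_mult. field. now split.
  - apply (is_Cderive_mult (fun t => Cpow (t - a) (S n)) (fun _ => / INR (fact (S n)))%C);
      [apply is_Cderive_Cpow | apply is_Cderive_const].
Qed.

Lemma taylor_term_0 (a z : C) : taylor_term a 0 z = 1%C.
Proof. unfold taylor_term. simpl. apply injective_projections; simpl; field. Qed.

Definition shift_derivs (D : nat -> C -> C) : nat -> C -> C := fun k => D (S k).

Lemma cderivs_shift (F : C -> C) (D : nat -> C -> C) :
  cderivs F D -> cderivs (D 1%nat) (shift_derivs D).
Proof. intros [_ HD]. split; [reflexivity | intros k z; apply HD]. Qed.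

Lemma is_Cderive_taylor_poly (D : nat -> C -> C) (a z : C) (N : nat) :
  is_Cderive (taylor_poly D a (S N)) z (taylor_poly (shift_derivs D) a N z).
Proof.
  induction N as [|N IH].
  - apply (@is_derive_ext C_AbsRing C_NormedModule (fun _ => D 0%nat a)); [|apply is_Cderive_const].
    intro t. simpl. rewrite taylor_term_0. apply injective_projections; simpl; ring.
  - apply (is_Cderive_ext_value _ _
             (taylor_poly (shift_derivs D) a N z
              + (0 * taylor_term a (S N) z + D (S N) a * taylor_term a N z))%C).
    + simpl. unfold shift_derivs. apply injective_projections; simpl; ring.
    + apply (@is_derive_plus C_AbsRing C_NormedModule); [exact IH|].
      apply (is_Cderive_mult (fun _ => D (S N) a) (taylor_term a (S N)));
        [apply is_Cderive_const | apply is_Cderive_taylor_term].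
Qed.

Lemma taylor_poly_center (D : nat -> C -> C) (a : C) (N : nat) :
  taylor_poly D a (S N) a = D 0%nat a.
Proof.
  induction N as [|N IH].
  - simpl. rewrite taylor_term_0. apply injective_projections; simpl; ring.
  - replace (taylor_poly D a (S (S N)) a)
      with (taylor_poly D a (S N) a + D (S N) a * taylor_term a (S N) a)%C by reflexivity.
    rewrite IH. unfold taylor_term.
    replace (a - a)%C with (RtoC 0) by (apply injective_projections; simpl; ring).
    simpl Cpow. rewrite Cmult_0_l. unfold Cdiv. rewrite !Cmult_0_l, Cmult_0_r. apply Cplus_0_r.
Qed.

Lemma taylor_remainder_bound (N : nat) :
  forall (F : C -> C) (D : nat -> C -> C) (a h : C) (B : R),
  cderivs F D ->
  (forall t, 0 <= t <= 1 -> Cmod (D N (a + RtoC t * h)%C) <= B) ->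
  Cmod (F (a + h) - taylor_poly D a N (a + h))%C <= B * Cmod h ^ N / INR (fact N).
Proof.
  induction N as [|N IH]; intros F D a h B HD HB.
  - destruct HD as [<- _]. specialize (HB 1 ltac:(lra)).
    replace (a + RtoC 1 * h)%C with (a + h)%C in HB
      by (apply injective_projections; simpl; ring).
    simpl. replace (D 0%nat (a + h)%C - 0)%C with (D 0%nat (a + h)%C)
      by (apply injective_projections; simpl; ring). lra.
  - set (K := B * Cmod h ^ S N / INR (fact (S N))).
    pose proof (Cmean_value_inequality (fun z => F z - taylor_poly D a (S N) z)%C
                  (fun z => D 1%nat z - taylor_poly (shift_derivs D) a N z)%C a h
                  (fun s => K * s ^ S N) (fun s => K * (INR (S N) * 1 * s ^ N))) as Hmvi.
    cbv beta in Hmvi.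
    replace (F (a + h) - taylor_poly D a (S N) (a + h) - (F a - taylor_poly D a (S N) a))%C
      with (F (a + h) - taylor_poly D a (S N) (a + h))%C in Hmvi
      by (rewrite taylor_poly_center, (proj1 HD); apply injective_projections; simpl; ring).
    rewrite pow1, pow_i, Rmult_0_r, Rminus_0_r in Hmvi by lia.
    rewrite <- (Rmult_1_r K). apply Hmvi.
    + intro z. apply (@is_derive_minus C_AbsRing C_NormedModule);
        [destruct HD as [<- HD1]; apply HD1 | apply is_Cderive_taylor_poly].
    + intro s. apply is_derive_scal, is_derive_pow, (@is_derive_id R_AbsRing).
    + intros s Hs.
      pose proof (IH (D 1%nat) (shift_derivs D) a (RtoC s * h)%C B (cderivs_shift F D HD))
        as HIH.
      rewrite Cmod_RtoC_mult, Rabs_pos_eq in HIH by lra.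
      eapply Rle_trans; [apply Rmult_le_compat_l; [apply Cmod_ge_0 | apply HIH]|].
      * intros t Ht. unfold shift_derivs.
        replace (a + RtoC t * (RtoC s * h))%C with (a + RtoC (t * s) * h)%C
          by (apply injective_projections; simpl; ring).
        apply HB. split; [apply Rmult_le_pos|]; nra.
      * right. unfold K. rewrite fact_simpl, mult_INR, Rpow_mult_distr.
        change (Cmod h ^ S N) with (Cmod h * Cmod h ^ N).
        field. split; apply not_0_INR; [apply fact_neq_0 | lia].
Qed.

Lemma taylor_remainder_near (F : C -> C) (D : nat -> C -> C) (p : C) (N : nat) :
  cderivs F D ->
  exists K, near0 (fun h => Cmod (F (p + h) - taylor_poly D p N (p + h))%C <= K * Cmod h ^ N).
Proof.
  intro HD. exists ((Cmod (D N p) + 1) / INR (fact N)).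
  destruct (is_Cderive_bounded_near _ _ _ (proj2 HD N p)) as [r [Hr Hb]].
  exists r. split; [exact Hr|]. intros h Hh.
  eapply Rle_trans; [apply (taylor_remainder_bound N F D p h (Cmod (D N p) + 1) HD)|].
  - intros t Ht. apply Hb. rewrite Cmod_RtoC_mult, Rabs_pos_eq by lra.
    pose proof (Cmod_ge_0 h). nra.
  - right. field. apply not_0_INR, fact_neq_0.
Qed.

Lemma taylor_poly_vanishing (D : nat -> C -> C) (a z : C) (n : nat) :
  (forall j, (j < n)%nat -> D j a = 0%C) -> taylor_poly D a n z = 0%C.
Proof.
  induction n as [|n IH]; intro Hzero; [reflexivity|].
  simpl. rewrite IH by (intros j Hj; apply Hzero; lia). rewrite Hzero by lia.
  apply injective_projections; simpl; ring.
Qed.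

(** * Second-order expansions *)

Definition bigO3 (e : C -> C) : Prop :=
  exists K, near0 (fun h => Cmod (e h) <= K * Cmod h ^ 3).

Definition bounded_near0 (g : C -> C) : Prop :=
  exists B, near0 (fun h => Cmod (g h) <= B).

Lemma bigO3_ext_near (e e' : C -> C) :
  near0 (fun h => e h = e' h) -> bigO3 e -> bigO3 e'.
Proof.
  intros Hee' [K HK]. exists K. apply (near0_and_impl _ _ _ Hee' HK).
  now intros h <-.
Qed.

Lemma bigO3_plus (e e' : C -> C) : bigO3 e -> bigO3 e' -> bigO3 (fun h => e h + e' h)%C.
Proof.
  intros [K HK] [K' HK']. exists (K + K').
  apply (near0_and_impl _ _ _ HK HK'). intros h H H'.
  eapply Rle_trans; [apply Cmod_triangle | lra].
Qed.

Lemma bigO3_mult_bounded (e g : C -> C) :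
  bigO3 e -> bounded_near0 g -> bigO3 (fun h => e h * g h)%C.
Proof.
  intros [K HK] [B HB]. exists (Rabs K * Rabs B).
  apply (near0_and_impl _ _ _ HK HB). intros h H H'.
  rewrite Cmod_mult.
  replace (Rabs K * Rabs B * Cmod h ^ 3) with ((Rabs K * Cmod h ^ 3) * Rabs B) by ring.
  pose proof (pow_le _ 3 (Cmod_ge_0 h)).
  apply Rmult_le_compat; try apply Cmod_ge_0; eapply Rle_trans; eauto;
    [apply Rmult_le_compat_r; auto|]; apply Rle_abs.
Qed.

Lemma bigO3_cube : bigO3 (fun h => h * h * h)%C.
Proof. exists 1. apply near0_true. intro h. rewrite !Cmod_mult. simpl. lra. Qed.

Lemma bounded_near0_const (c : C) : bounded_near0 (fun _ => c).
Proof. exists (Cmod c). apply near0_true. intro; lra. Qed.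

Lemma bounded_near0_id : bounded_near0 (fun h => h).
Proof. exists 1. refine (near0_impl _ _ _ (near0_Cmod_lt 1 Rlt_0_1)). intros; lra. Qed.

Lemma bounded_near0_plus (g g' : C -> C) :
  bounded_near0 g -> bounded_near0 g' -> bounded_near0 (fun h => g h + g' h)%C.
Proof.
  intros [B HB] [B' HB']. exists (B + B').
  apply (near0_and_impl _ _ _ HB HB'). intros h H H'.
  eapply Rle_trans; [apply Cmod_triangle | lra].
Qed.

Lemma bounded_near0_mult (g g' : C -> C) :
  bounded_near0 g -> bounded_near0 g' -> bounded_near0 (fun h => g h * g' h)%C.
Proof.
  intros [B HB] [B' HB']. exists (Rabs B * Rabs B').
  apply (near0_and_impl _ _ _ HB HB'). intros h H H'.
  rewrite Cmod_mult.
  apply Rmult_le_compat; try apply Cmod_ge_0; eapply Rle_trans; eauto; apply Rle_abs.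
Qed.

Lemma bounded_near0_quadratic (c0 c1 c2 : C) :
  bounded_near0 (fun h => c0 + c1 * h + c2 * (h * h))%C.
Proof.
  repeat apply bounded_near0_plus || apply bounded_near0_mult;
    apply bounded_near0_const || apply bounded_near0_id.
Qed.

Definition expansion2 (F : C -> C) (p c0 c1 c2 : C) : Prop :=
  bigO3 (fun h => F (p + h) - (c0 + c1 * h + c2 * (h * h)))%C.

Definition expandable2 (F : C -> C) (p : C) : Prop :=
  exists c0 c1 c2, expansion2 F p c0 c1 c2.

Lemma expansion2_value (F : C -> C) (p c0 c1 c2 : C) :
  expansion2 F p c0 c1 c2 -> c0 = F p.
Proof.
  intros [K [r [Hr HK]]]. specialize (HK 0%C). rewrite Cmod_0, pow_i, Rmult_0_r in HK by lia.
  specialize (HK Hr).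
  assert (E : (F (p + 0) - (c0 + c1 * 0 + c2 * (0 * 0)))%C = 0%C)
    by (apply Cmod_eq_0; pose proof (Cmod_ge_0 (F (p + 0) - (c0 + c1 * 0 + c2 * (0 * 0)))%C); lra).
  replace (p + 0)%C with p in E by (apply injective_projections; simpl; ring).
  transitivity (F p - (F p - (c0 + c1 * 0 + c2 * (0 * 0))))%C;
    [|rewrite E]; apply injective_projections; simpl; ring.
Qed.

Lemma expansion2_exact (F : C -> C) (p c0 c1 c2 : C) :
  (forall h, F (p + h)%C = (c0 + c1 * h + c2 * (h * h))%C) -> expansion2 F p c0 c1 c2.
Proof.
  intro HF. exists 0. apply near0_true. intro h. rewrite HF.
  replace (c0 + c1 * h + c2 * (h * h) - (c0 + c1 * h + c2 * (h * h)))%C with (RtoC 0)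
    by (apply injective_projections; simpl; ring).
  rewrite Cmod_0. lra.
Qed.

Lemma expansion2_lipschitz (F : C -> C) (p c0 c1 c2 : C) :
  expansion2 F p c0 c1 c2 ->
  exists L, near0 (fun h => Cmod (F (p + h) - F p)%C <= L * Cmod h).
Proof.
  intros HF. pose proof (expansion2_value _ _ _ _ _ HF) as Hc0. destruct HF as [K HK].
  exists (Cmod c1 + Cmod c2 + Rabs K).
  apply (near0_and_impl _ _ _ HK (near0_Cmod_lt 1 Rlt_0_1)). intros h He Hh.
  set (e := (F (p + h) - (c0 + c1 * h + c2 * (h * h)))%C) in *.
  replace (F (p + h) - F p)%C with (e + c1 * h + c2 * h * h)%C
    by (unfold e; rewrite <- Hc0; apply injective_projections; simpl; ring).
  pose proof (Cmod_triangle (e + c1 * h)%C (c2 * h * h)%C).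
  pose proof (Cmod_triangle e (c1 * h)%C).
  rewrite !Cmod_mult in *. simpl in He.
  pose proof (Cmod_ge_0 h). pose proof (Cmod_ge_0 c1). pose proof (Cmod_ge_0 c2).
  pose proof (Rabs_pos K). pose proof (Rle_abs K).
  assert (Cmod h * Cmod h <= Cmod h) by nra.
  set (x := Cmod h * (Cmod h * (Cmod h * 1))) in He.
  assert (0 <= x) by (unfold x; nra). assert (x <= Cmod h) by (unfold x; nra).
  assert (K * x <= Rabs K * x) by (apply Rmult_le_compat_r; auto).
  assert (Rabs K * x <= Rabs K * Cmod h) by (apply Rmult_le_compat_l; auto).
  nra.
Qed.

Lemma expandable2_bounded (F : C -> C) (p : C) :
  expandable2 F p -> bounded_near0 (fun h => F (p + h))%C.
Proof.
  intros [c0 [c1 [c2 HF]]]. destruct (expansion2_lipschitz _ _ _ _ _ HF) as [L HL].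
  exists (Cmod (F p) + Rabs L).
  apply (near0_and_impl _ _ _ HL (near0_Cmod_lt 1 Rlt_0_1)). intros h HLh Hh.
  replace (F (p + h)%C) with (F p + (F (p + h) - F p))%C
    by (apply injective_projections; simpl; ring).
  eapply Rle_trans; [apply Cmod_triangle|].
  pose proof (Cmod_ge_0 h). pose proof (Rle_abs L). pose proof (Rabs_pos L). nra.
Qed.

Lemma expandable2_nonvanishing (F : C -> C) (p : C) :
  expandable2 F p -> F p <> 0%C -> near0 (fun h => Cmod (F p) / 2 <= Cmod (F (p + h)%C)).
Proof.
  intros [c0 [c1 [c2 HF]]] Hp. destruct (expansion2_lipschitz _ _ _ _ _ HF) as [L HL].
  assert (HFp : 0 < Cmod (F p)) by now apply Cmod_gt_0.
  apply (near0_and_impl _ _ _ HL (near0_Cmod_lt (Cmod (F p) / (2 * (Rabs L + 1))) ltac:(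
    apply Rdiv_lt_0_compat; [|pose proof (Rabs_pos L)]; lra))).
  intros h HLh Hh.
  pose proof (Cmod_triangle (F (p + h)%C) (F p - F (p + h))%C).
  replace (F (p + h) + (F p - F (p + h)))%C with (F p) in H
    by (apply injective_projections; simpl; ring).
  replace (F p - F (p + h))%C with (- (F (p + h) - F p))%C in H
    by (apply injective_projections; simpl; ring).
  rewrite Cmod_opp in H.
  assert (Cmod h * (Rabs L + 1) < Cmod (F p) / 2).
  { apply Rmult_lt_compat_r with (r := Rabs L + 1) in Hh; [|pose proof (Rabs_pos L); lra].
    replace (Cmod (F p) / (2 * (Rabs L + 1)) * (Rabs L + 1)) with (Cmod (F p) / 2) in Hh
      by (field; pose proof (Rabs_pos L); lra).
    exact Hh. }
  pose proof (Cmod_ge_0 h). pose proof (Rle_abs L). nra.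
Qed.

Lemma expandable2_ext_near (F G : C -> C) (p : C) :
  near0 (fun h => F (p + h)%C = G (p + h)%C) -> expandable2 F p -> expandable2 G p.
Proof.
  intros HFG [c0 [c1 [c2 HF]]]. exists c0, c1, c2.
  refine (bigO3_ext_near _ _ (near0_impl _ _ _ HFG) HF).
  intros h E. cbv beta. now rewrite E.
Qed.

Lemma expandable2_mult (F G : C -> C) (p : C) :
  expandable2 F p -> expandable2 G p -> expandable2 (fun z => F z * G z)%C p.
Proof.
  intros HFe HGe. pose proof (expandable2_bounded _ _ HGe) as HGb.
  destruct HFe as [f0 [f1 [f2 HF]]], HGe as [g0 [g1 [g2 HG]]].
  exists (f0 * g0)%C, (f0 * g1 + f1 * g0)%C, (f0 * g2 + f1 * g1 + f2 * g0)%C.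
  apply (bigO3_ext_near (fun h =>
     (F (p + h) - (f0 + f1 * h + f2 * (h * h))) * G (p + h)
     + (G (p + h) - (g0 + g1 * h + g2 * (h * h))) * (f0 + f1 * h + f2 * (h * h))
     + h * h * h * (f1 * g2 + f2 * g1 + f2 * g2 * h))%C).
  - apply near0_true. intro h. apply injective_projections; simpl; ring.
  - repeat apply bigO3_plus; apply bigO3_mult_bounded; auto using bigO3_cube.
    + apply bounded_near0_quadratic.
    + repeat apply bounded_near0_plus || apply bounded_near0_mult;
        apply bounded_near0_const || apply bounded_near0_id.
Qed.

(* With q the formal inverse of the quadratic part of P, the product P q is
   1 up to a multiple of h^3, whence 1/P - q = -(P q - 1) / P. *)
Lemma expandable2_inv (P : C -> C) (p : C) :
  expandable2 P p -> P p <> 0%C -> expandable2 (fun z => / P z)%C p.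
Proof.
  intros HPe Hp. pose proof (expandable2_nonvanishing _ _ HPe Hp) as Hnear.
  assert (HPp : 0 < Cmod (P p)) by now apply Cmod_gt_0.
  destruct HPe as [P0 [P1 [P2 HP]]].
  rewrite <- (expansion2_value _ _ _ _ _ HP) in Hp.
  set (q0 := (/ P0)%C). set (q1 := (- P1 * q0 / P0)%C).
  set (q2 := ((- P1 * q1 - P2 * q0) / P0)%C).
  exists q0, q1, q2.
  apply (bigO3_ext_near (fun h =>
     ((P (p + h) - (P0 + P1 * h + P2 * (h * h))) * (q0 + q1 * h + q2 * (h * h))
      + h * h * h * (P1 * q2 + P2 * q1 + P2 * q2 * h)) * (- / P (p + h)))%C).
  - refine (near0_impl _ _ _ Hnear). intros h Hh.
    assert (HPh : P (p + h)%C <> 0%C) by (intro E; rewrite E, Cmod_0 in Hh; lra).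
    unfold q2, q1, q0. field. now split.
  - apply bigO3_mult_bounded.
    + apply bigO3_plus; apply bigO3_mult_bounded; auto using bigO3_cube.
      * apply bounded_near0_quadratic.
      * repeat apply bounded_near0_plus || apply bounded_near0_mult;
          apply bounded_near0_const || apply bounded_near0_id.
    + exists (2 / Cmod (P p)). refine (near0_impl _ _ _ Hnear). intros h Hh.
      assert (HPh : P (p + h)%C <> 0%C) by (intro E; rewrite E, Cmod_0 in Hh; lra).
      rewrite Cmod_opp, Cmod_inv by exact HPh.
      apply (Rmult_le_reg_l (Cmod (P (p + h)%C) * Cmod (P p) / 2));
        [apply Rmult_lt_0_compat; [apply Rmult_lt_0_compat|]; lra|].
      field_simplify; lra.
Qed.

Lemma expandable2_Cpow_sub (a p : C) (n : nat) : expandable2 (fun z => Cpow (z - a) n) p.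
Proof.
  induction n as [|n IH].
  - exists 1%C, 0%C, 0%C. apply expansion2_exact. intro h.
    apply injective_projections; simpl; ring.
  - apply (expandable2_mult (fun z => z - a)%C (fun z => Cpow (z - a) n)); [|exact IH].
    exists (p - a)%C, 1%C, 0%C. apply expansion2_exact. intro h.
    apply injective_projections; simpl; ring.
Qed.

Lemma taylor_poly_3 (D : nat -> C -> C) (p h : C) :
  taylor_poly D p 3 (p + h) = (D 0%nat p + D 1%nat p * h + D 2%nat p / 2 * (h * h))%C.
Proof.
  unfold taylor_poly, taylor_term.
  replace (p + h - p)%C with h by (apply injective_projections; simpl; ring).
  simpl. apply injective_projections; simpl; field.
Qed.

Lemma expandable2_of_cderivs (F : C -> C) (D : nat -> C -> C) (p : C) :
  cderivs F D -> expandable2 F p.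
Proof.
  intro HD. exists (D 0%nat p), (D 1%nat p), (D 2%nat p / 2)%C.
  destruct (taylor_remainder_near F D p 3 HD) as [K HK]. exists K.
  refine (near0_impl _ _ _ HK). intro h. now rewrite taylor_poly_3.
Qed.

(** * Dividing out a zero of finite order *)

(* At z = a it takes the value of the limit of f z / (z - a)^m. *)
Definition zero_quotient (f : C -> C) (D : nat -> C -> C) (a : C) (m : nat) (z : C) : C :=
  if excluded_middle_informative (z = a) then (D m a / INR (fact m))%C
  else (f z / Cpow (z - a) m)%C.

Section ZeroOfOrder.

Variables (f : C -> C) (D : nat -> C -> C) (a : C) (m : nat).
Hypothesis Hf : cderivs f D.
Hypothesis Hzero : forall j, (j < m)%nat -> D j a = 0%C.

Lemma zero_quotient_factor (z : C) : f z = (zero_quotient f D a m z * Cpow (z - a) m)%C.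
Proof.
  unfold zero_quotient. destruct (excluded_middle_informative (z = a)) as [->|Hza].
  - destruct Hf as [<- _]. destruct m as [|n].
    + simpl. apply injective_projections; simpl; field.
    + rewrite Hzero by lia. replace (a - a)%C with (RtoC 0)
        by (apply injective_projections; simpl; ring).
      simpl. apply injective_projections; simpl; ring.
  - field. apply Cpow_nz, Cminus_neq_0, Hza.
Qed.

Lemma taylor_poly_zero_of_order (h : C) :
  taylor_poly D a (S (S (S m))) (a + h) =
  (Cpow h m * (D m a / INR (fact m) + D (S m) a / INR (fact (S m)) * h
               + D (S (S m)) a / INR (fact (S (S m))) * (h * h)))%C.
Proof.
  cbn [taylor_poly]. rewrite (taylor_poly_vanishing D a _ m Hzero). unfold taylor_term.
  replace (a + h - a)%C with h by (apply injective_projections; simpl; ring).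
  pose proof (RtoC_INR_fact_neq_0 m). pose proof (RtoC_INR_fact_neq_0 (S m)).
  pose proof (RtoC_INR_fact_neq_0 (S (S m))).
  simpl Cpow. field. auto.
Qed.

(* Near a, the Taylor remainder of order m + 3 is divisible by h^m, with an O(h^3) quotient. *)
Lemma expandable2_zero_quotient_center : expandable2 (zero_quotient f D a m) a.
Proof.
  exists (D m a / INR (fact m))%C, (D (S m) a / INR (fact (S m)))%C,
    (D (S (S m)) a / INR (fact (S (S m))))%C.
  destruct (taylor_remainder_near f D a (S (S (S m))) Hf) as [K HK]. exists K.
  refine (near0_impl _ _ _ HK). intros h Hh. cbv beta in Hh |- *.
  rewrite taylor_poly_zero_of_order in Hh.
  set (q := (D m a / INR (fact m) + D (S m) a / INR (fact (S m)) * h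
             + D (S (S m)) a / INR (fact (S (S m))) * (h * h))%C) in *.
  unfold zero_quotient. destruct (excluded_middle_informative (a + h = a)%C) as [E|E].
  - assert (Hh0 : h = 0%C).
    { replace h with (a + h - a)%C by (apply injective_projections; simpl; ring).
      rewrite E. apply injective_projections; simpl; ring. }
    subst h. unfold q.
    replace (D m a / INR (fact m) - (D m a / INR (fact m) + D (S m) a / INR (fact (S m)) * 0
             + D (S (S m)) a / INR (fact (S (S m))) * (0 * 0)))%C with (RtoC 0)
      by (apply injective_projections; simpl; ring).
    rewrite Cmod_0, pow_i, Rmult_0_r by lia. lra.
  - assert (Hh0 : h <> 0%C) by (intro H0; apply E; rewrite H0; apply injective_projections; simpl; ring).
    replace (a + h - a)%C with h by (apply injective_projections; simpl; ring).
    assert (Hpow : Cpow h m <> 0%C) by now apply Cpow_nz.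
    replace (f (a + h) / Cpow h m - q)%C with ((f (a + h) - Cpow h m * q) / Cpow h m)%C
      by (field; exact Hpow).
    rewrite Cmod_div, Cmod_pow by exact Hpow.
    assert (Hm : 0 < Cmod h ^ m) by now apply pow_lt, Cmod_gt_0.
    apply (Rmult_le_reg_r (Cmod h ^ m)); [exact Hm|].
    unfold Rdiv. rewrite Rmult_assoc, Rinv_l, Rmult_1_r by lra.
    rewrite Rmult_assoc, <- pow_add. now replace (3 + m)%nat with (S (S (S m))) by lia.
Qed.

Lemma expandable2_zero_quotient_away (p : C) : p <> a -> expandable2 (zero_quotient f D a m) p.
Proof.
  intro Hpa.
  apply (expandable2_ext_near (fun z => f z * / Cpow (z - a) m)%C).
  - exists (Cmod (p - a)). split; [now apply Cmod_gt_0, Cminus_neq_0|]. intros h Hh.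
    unfold zero_quotient. destruct (excluded_middle_informative (p + h = a)%C) as [E|E]; [|reflexivity].
    rewrite <- E in Hh. replace (p - (p + h))%C with (- h)%C in Hh
      by (apply injective_projections; simpl; ring).
    rewrite Cmod_opp in Hh. lra.
  - apply expandable2_mult; [now apply (expandable2_of_cderivs f D)|].
    apply expandable2_inv; [apply expandable2_Cpow_sub|].
    apply Cpow_nz, Cminus_neq_0, Hpa.
Qed.

Lemma expandable2_zero_quotient (p : C) : expandable2 (zero_quotient f D a m) p.
Proof.
  destruct (excluded_middle_informative (p = a)) as [->|Hpa].
  - apply expandable2_zero_quotient_center.
  - now apply expandable2_zero_quotient_away.
Qed.

End ZeroOfOrder.

(** * A maximum principle on squares *)

Definition sup_norm (z : C) : R := Rmax (Rabs (Re z)) (Rabs (Im z)).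

Lemma sup_norm_le_Cmod (z : C) : sup_norm z <= Cmod z.
Proof. apply Rmax_Cmod. Qed.

Lemma Cmod_le_sup_norm (z : C) : Cmod z <= 2 * sup_norm z.
Proof.
  eapply Rle_trans; [apply Cmod_2Rmax|]. apply Rmult_le_compat_r.
  - eapply Rle_trans; [apply Rabs_pos | apply Rmax_l].
  - apply Rsqr_incr_0_var; [rewrite Rsqr_sqrt by lra; unfold Rsqr | ]; lra.
Qed.

Lemma sup_norm_center (a : C) : sup_norm (a - a) = 0.
Proof.
  replace (a - a)%C with (RtoC 0) by (apply injective_projections; simpl; ring).
  unfold sup_norm. simpl. rewrite Rabs_R0. apply Rmax_left, Rle_refl.
Qed.

Lemma sup_norm_triangle (x y : C) : sup_norm (x + y) <= sup_norm x + sup_norm y.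
Proof.
  unfold sup_norm. apply Rmax_lub; simpl; (eapply Rle_trans; [apply Rabs_triang|]);
    apply Rplus_le_compat; apply Rmax_l || apply Rmax_r.
Qed.

Lemma sup_norm_le_iff (z a : C) (r : R) :
  sup_norm (z - a) <= r <-> Re a - r <= Re z <= Re a + r /\ Im a - r <= Im z <= Im a + r.
Proof.
  unfold sup_norm. change (Re (z - a)%C) with (Re z - Re a).
  change (Im (z - a)%C) with (Im z - Im a). split.
  - intro H. pose proof (Rmax_l (Rabs (Re z - Re a)) (Rabs (Im z - Im a))).
    pose proof (Rmax_r (Rabs (Re z - Re a)) (Rabs (Im z - Im a))).
    assert (Hre : Rabs (Re z - Re a) <= r) by lra.
    assert (Him : Rabs (Im z - Im a) <= r) by lra.
    apply Rabs_le_between in Hre, Him. lra.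
  - intros [Hre Him]. apply Rmax_lub; apply Rabs_le; lra.
Qed.

Lemma list_argmax (g : C -> R) (S : C -> Prop) (x0 : C) (l : list C) :
  S x0 -> exists t, S t /\ forall u, In u l -> S u -> g u <= g t.
Proof.
  intro Hx0. induction l as [|u l [t [Ht Hmax]]].
  - exists x0. split; [exact Hx0 | intros u []].
  - destruct (classic (S u /\ g t < g u)) as [[Hu Hlt]|Hno].
    + exists u. split; [exact Hu|]. intros u' [<-|Hu'] Su'; [lra|].
      specialize (Hmax u' Hu' Su'). lra.
    + exists t. split; [exact Ht|]. intros u' [<-|Hu'] Su'; [|auto].
      apply Rnot_lt_le. intro Hlt. auto.
Qed.

Lemma square_finite_cover (a : C) (r : R) (delta : C -> posreal) :
  exists l : list C, forall z, sup_norm (z - a) <= r ->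
    exists t, In t l /\ sup_norm (t - a) <= r /\ ball t (delta t) z.
Proof.
  apply NNPP. intro Hno.
  apply (compactness_list 2 (Re a - r, (Im a - r, tt)) (Re a + r, (Im a + r, tt))
           (fun t => delta (fst t, fst (snd t)))).
  intros [l Hl]. apply Hno.
  exists (map (fun t : Compactness.Tn 2 R => (fst t, fst (snd t)) : C) l).
  intros [x y] Hz. apply sup_norm_le_iff in Hz.
  destruct (Hl (x, (y, tt))) as [[t1 [t2 []]] [Hin [Hbd Hclose]]]; [simpl in *; tauto|].
  exists (t1, t2). split; [|split].
  - exact (in_map (fun t : Compactness.Tn 2 R => (fst t, fst (snd t)) : C) _ _ Hin).
  - apply sup_norm_le_iff. simpl in Hbd |- *. tauto.
  - simpl in Hclose. split; apply Hclose.
Qed.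

Lemma continuous_gauge (F : C -> R) (S : C -> Prop) (eps : C -> R) :
  (forall p, S p -> continuous F p) -> (forall p, S p -> 0 < eps p) ->
  exists delta : C -> posreal,
    forall p z, S p -> ball p (delta p) z -> Rabs (F z - F p) < eps p.
Proof.
  intros Hc He.
  destruct (choice (fun p (d : posreal) =>
              S p -> forall z, ball p d z -> Rabs (F z - F p) < eps p)) as [delta Hdelta].
  - intro p. destruct (classic (S p)) as [Sp|Sp].
    + destruct (proj1 (filterlim_locally F (F p)) (Hc p Sp) (mkposreal _ (He p Sp)))
        as [d Hd].
      exists d. intros _ z Hz. exact (Hd z Hz).
    + exists (mkposreal 1 Rlt_0_1). intro; contradiction.
  - exists delta. intros p z Sp. now apply Hdelta.
Qed.

Lemma continuous_bounded_square (F : C -> R) (a : C) (r : R) :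
  0 <= r -> (forall p, sup_norm (p - a) <= r -> continuous F p) ->
  exists M, forall z, sup_norm (z - a) <= r -> F z <= M.
Proof.
  intros Hr Hc.
  destruct (continuous_gauge F _ (fun _ => 1) Hc (fun _ _ => Rlt_0_1)) as [delta Hdelta].
  destruct (square_finite_cover a r delta) as [l Hl].
  destruct (list_argmax F (fun t => sup_norm (t - a) <= r) a l) as [t [_ Hmax]];
    [rewrite sup_norm_center; exact Hr|].
  exists (F t + 1). intros z Hz.
  destruct (Hl z Hz) as [u [Hu [Su Hball]]].
  specialize (Hdelta u z Su Hball). specialize (Hmax u Hu Su).
  apply Rabs_def2 in Hdelta. lra.
Qed.

(* Otherwise some (M + F t) / 2 < M bounds F, M being the supremum and F t the largest
   value of F at the centres of a finite cover by balls on which F < (M + F centre) / 2. *)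
Lemma continuous_argmax_square (F : C -> R) (a : C) (r : R) :
  0 <= r -> (forall p, sup_norm (p - a) <= r -> continuous F p) ->
  exists p, sup_norm (p - a) <= r /\ forall z, sup_norm (z - a) <= r -> F z <= F p.
Proof.
  intros Hr Hc.
  assert (Ha : sup_norm (a - a) <= r) by (rewrite sup_norm_center; exact Hr).
  destruct (continuous_bounded_square F a r Hr Hc) as [M0 HM0].
  destruct (completeness (fun y => exists z, sup_norm (z - a) <= r /\ y = F z))
    as [M [HMub HMlub]].
  { exists M0. intros y [z [Hz ->]]. auto. }
  { exists (F a), a. auto. }
  apply NNPP. intro Hno.
  assert (Hlt : forall p, sup_norm (p - a) <= r -> F p < M).
  { intros p Hp. destruct (Rle_lt_or_eq_dec (F p) M) as [H|H]; [apply HMub; eauto | exact H|].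
    exfalso. apply Hno. exists p. split; [exact Hp|]. intros z Hz. rewrite H. apply HMub; eauto. }
  destruct (continuous_gauge F _ (fun p => (M - F p) / 2) Hc) as [delta Hdelta].
  { intros p Hp. specialize (Hlt p Hp). lra. }
  destruct (square_finite_cover a r delta) as [l Hl].
  destruct (list_argmax F (fun t => sup_norm (t - a) <= r) a l Ha) as [t [St Hmax]].
  assert (Hub : is_upper_bound (fun y => exists z, sup_norm (z - a) <= r /\ y = F z)
                  ((M + F t) / 2)).
  { intros y [z [Hz ->]]. destruct (Hl z Hz) as [u [Hu [Su Hball]]].
    specialize (Hdelta u z Su Hball). specialize (Hmax u Hu Su).
    apply Rabs_def2 in Hdelta. lra. }
  specialize (HMlub _ Hub). specialize (Hlt t St). lra.
Qed.

Lemma continuous_of_local_lipschitz (F : C -> R) (p : C) :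
  (exists L, near0 (fun h => Rabs (F (p + h)%C - F p) <= L * Cmod h)) -> continuous F p.
Proof.
  intros [L HL]. apply filterlim_locally. intro eps.
  assert (HL1 : 0 < Rabs L + 1) by (pose proof (Rabs_pos L); lra).
  destruct (near0_and _ _ HL (near0_Cmod_lt (eps / (Rabs L + 1))
              (Rdiv_lt_0_compat _ _ (cond_pos eps) HL1))) as [r [Hr Hnear]].
  exists (mkposreal (r / 2) ltac:(lra)). intros z [Hre Him].
  assert (Hzp : Cmod (z - p) < r).
  { eapply Rle_lt_trans; [apply Cmod_le_sup_norm|].
    enough (sup_norm (z - p) < r / 2) by lra. now apply Rmax_lub_lt. }
  destruct (Hnear (z - p)%C Hzp) as [HLz Hsmall].
  replace (p + (z - p))%C with z in HLz by (apply injective_projections; simpl; ring).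
  change (Rabs (F z - F p) < eps).
  apply (Rmult_lt_compat_r (Rabs L + 1)) in Hsmall; [|exact HL1].
  replace (eps / (Rabs L + 1) * (Rabs L + 1)) with (pos eps) in Hsmall by (field; lra).
  pose proof (Cmod_ge_0 (z - p)). pose proof (Rle_abs L). nra.
Qed.

Definition discrete_laplacian (v : C -> R) (p h : C) : R :=
  v (p + h)%C + v (p - h)%C + v (p + Ci * h)%C + v (p - Ci * h)%C - 4 * v p.

Lemma discrete_laplacian_Cmod_sqr (a p h : C) :
  discrete_laplacian (fun z => Cmod (z - a) ^ 2) p h = 4 * Cmod h ^ 2.
Proof.
  unfold discrete_laplacian. rewrite !Cmod_sqr.
  destruct p as [p1 p2], h as [h1 h2], a as [a1 a2]. simpl. ring.
Qed.

(* The linear and quadratic terms of the expansion cancel in the discrete Laplacian. *)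
Lemma expandable2_laplacian_bound (w : C -> C) (c p : C) :
  expandable2 w p ->
  exists K, near0 (fun h => Rabs (discrete_laplacian (fun z => Re (c * w z)) p h)
                            <= K * Cmod h ^ 3).
Proof.
  intros [c0 [c1 [c2 HF]]]. pose proof (expansion2_value _ _ _ _ _ HF) as Hc0.
  destruct HF as [K HK]. exists (Cmod c * (4 * K)).
  set (e := fun h => (w (p + h) - (c0 + c1 * h + c2 * (h * h)))%C) in HK.
  destruct HK as [r [Hr HK]]. exists r. split; [exact Hr|]. intros h Hh.
  assert (Hrot : forall u, Cmod u = Cmod h -> Cmod (e u) <= K * Cmod h ^ 3)
    by (intros u Hu; rewrite <- Hu; apply HK; lra).
  assert (Hsum : discrete_laplacian (fun z => Re (c * w z)) p h
                 = Re (c * (e h + e (- h) + e (Ci * h) + e (- (Ci * h))))%C).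
  { unfold discrete_laplacian, e. change (p - h)%C with (p + - h)%C.
    change (p - Ci * h)%C with (p + - (Ci * h))%C. rewrite <- Hc0.
    destruct c as [c' c'']. destruct h as [h1 h2]. simpl. ring. }
  rewrite Hsum. eapply Rle_trans; [apply re_le_Cmod|]. rewrite Cmod_mult, Rmult_assoc.
  apply Rmult_le_compat_l; [apply Cmod_ge_0|].
  pose proof (Hrot h eq_refl). pose proof (Hrot (- h)%C (Cmod_opp h)).
  pose proof (Hrot (Ci * h)%C (Cmod_Ci_mult h)).
  pose proof (Hrot (- (Ci * h))%C ltac:(now rewrite Cmod_opp, Cmod_Ci_mult)).
  pose proof (Cmod_triangle (e h + e (- h) + e (Ci * h))%C (e (- (Ci * h)))%C).
  pose proof (Cmod_triangle (e h + e (- h))%C (e (Ci * h)%C)).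
  pose proof (Cmod_triangle (e h) (e (- h)%C)). lra.
Qed.

Lemma discrete_laplacian_plus_scal (f g : C -> R) (d : R) (p h : C) :
  discrete_laplacian (fun z => f z + d * g z) p h
  = discrete_laplacian f p h + d * discrete_laplacian g p h.
Proof. unfold discrete_laplacian. ring. Qed.

Lemma Cmod_sqr_lipschitz (u h : C) :
  Cmod h < 1 -> Rabs (Cmod (u + h) ^ 2 - Cmod u ^ 2) <= (2 * Cmod u + 1) * Cmod h.
Proof.
  intro Hh. pose proof (Cmod_triangle u h) as Hup.
  pose proof (Cmod_triangle (u + h)%C (- h)%C) as Hdown. rewrite Cmod_opp in Hdown.
  replace (u + h + - h)%C with u in Hdown by (apply injective_projections; simpl; ring).
  pose proof (Cmod_ge_0 u). pose proof (Cmod_ge_0 h). pose proof (Cmod_ge_0 (u + h)).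
  apply Rabs_le. split; nra.
Qed.

(* Re (c w) is discretely harmonic up to O(h^3); the term d |z - a|^2 makes it
   strictly subharmonic. *)
Definition perturbed_Re (w : C -> C) (c a : C) (d : R) (z : C) : R :=
  Re (c * w z) + d * Cmod (z - a) ^ 2.

Lemma continuous_perturbed_Re (w : C -> C) (c a p : C) (d : R) :
  expandable2 w p -> continuous (perturbed_Re w c a d) p.
Proof.
  intros [c0 [c1 [c2 Hw]]]. destruct (expansion2_lipschitz _ _ _ _ _ Hw) as [L HL].
  apply continuous_of_local_lipschitz. unfold perturbed_Re.
  exists (Cmod c * L + Rabs d * (2 * Cmod (p - a) + 1)).
  apply (near0_and_impl _ _ _ HL (near0_Cmod_lt 1 Rlt_0_1)). intros h HLh Hh.
  replace (p + h - a)%C with (p - a + h)%C by (apply injective_projections; simpl; ring).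
  pose proof (Cmod_sqr_lipschitz (p - a)%C h Hh) as Hq.
  replace (Re (c * w (p + h)%C) + d * Cmod (p - a + h) ^ 2 - (Re (c * w p) + d * Cmod (p - a) ^ 2))
    with (Re (c * (w (p + h) - w p))%C + d * (Cmod (p - a + h) ^ 2 - Cmod (p - a) ^ 2))
    by (simpl; ring).
  eapply Rle_trans; [apply Rabs_triang|]. rewrite Rabs_mult.
  assert (Rabs (Re (c * (w (p + h) - w p)))%C <= Cmod c * L * Cmod h).
  { eapply Rle_trans; [apply re_le_Cmod|]. rewrite Cmod_mult, Rmult_assoc.
    apply Rmult_le_compat_l; [apply Cmod_ge_0 | exact HLh]. }
  assert (Rabs d * Rabs (Cmod (p - a + h) ^ 2 - Cmod (p - a) ^ 2)
          <= Rabs d * ((2 * Cmod (p - a) + 1) * Cmod h))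
    by (apply Rmult_le_compat_l; [apply Rabs_pos | exact Hq]).
  lra.
Qed.

Lemma discrete_laplacian_perturbed_Re_pos (w : C -> C) (c a p : C) (d : R) :
  expandable2 w p -> 0 < d -> forall eps, 0 < eps ->
  exists h, Cmod h < eps /\ 0 < discrete_laplacian (perturbed_Re w c a d) p h.
Proof.
  intros Hw Hd eps Heps.
  destruct (expandable2_laplacian_bound w c p Hw) as [K [r [Hr HK]]].
  assert (HK1 : 0 < Rabs K + 1) by (pose proof (Rabs_pos K); lra).
  set (m := Rmin (Rmin r eps) (4 * d / (Rabs K + 1))).
  assert (Hm : 0 < m) by (repeat apply Rmin_pos; try apply Rdiv_lt_0_compat; lra).
  assert (Hmr : m <= r /\ m <= eps).
  { pose proof (Rmin_l (Rmin r eps) (4 * d / (Rabs K + 1))).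
    pose proof (Rmin_l r eps). pose proof (Rmin_r r eps). unfold m. lra. }
  assert (HmK : m * (Rabs K + 1) <= 4 * d).
  { replace (4 * d) with (4 * d / (Rabs K + 1) * (Rabs K + 1)) by (field; lra).
    apply Rmult_le_compat_r; [lra | apply Rmin_r]. }
  set (t := m / 2).
  assert (Ht : 0 < t /\ t < r /\ t < eps /\ t * (Rabs K + 1) < 4 * d) by (unfold t; nra).
  destruct Ht as [Ht0 [Htr [Hteps HtK]]].
  assert (Hmod : Cmod (RtoC t) = t) by (rewrite Cmod_R; apply Rabs_pos_eq; lra).
  exists (RtoC t). rewrite Hmod. split; [exact Hteps|].
  unfold perturbed_Re. rewrite discrete_laplacian_plus_scal, discrete_laplacian_Cmod_sqr, Hmod.
  specialize (HK (RtoC t) ltac:(lra)). rewrite Hmod in HK.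
  apply Rabs_le_between in HK. pose proof (Rle_abs K).
  assert (0 < t ^ 2) by (apply pow_lt; lra).
  assert (HKt : Rabs K * t < 4 * d) by lra.
  assert (K * t ^ 3 <= Rabs K * t * t ^ 2).
  { replace (K * t ^ 3) with (K * t * t ^ 2) by ring.
    apply Rmult_le_compat_r; [lra|]. apply Rmult_le_compat_r; lra. }
  assert (Rabs K * t * t ^ 2 < 4 * d * t ^ 2) by (apply Rmult_lt_compat_r; lra).
  lra.
Qed.

Lemma perturbed_Re_no_interior_max (w : C -> C) (c a p : C) (d r : R) :
  expandable2 w p -> 0 < d -> sup_norm (p - a) < r ->
  ~ (forall z, sup_norm (z - a) <= r -> perturbed_Re w c a d z <= perturbed_Re w c a d p).
Proof.
  intros Hw Hd Hp Hmax.
  destruct (discrete_laplacian_perturbed_Re_pos w c a p d Hw Hd (r - sup_norm (p - a)))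
    as [h [Hh Hpos]]; [lra|].
  assert (Hin : forall u, Cmod u = Cmod h ->
                perturbed_Re w c a d (p + u)%C <= perturbed_Re w c a d p).
  { intros u Hu. apply Hmax.
    replace (p + u - a)%C with (p - a + u)%C by (apply injective_projections; simpl; ring).
    eapply Rle_trans; [apply sup_norm_triangle|].
    pose proof (sup_norm_le_Cmod u). lra. }
  pose proof (Hin h eq_refl). pose proof (Hin (- h)%C (Cmod_opp h)).
  pose proof (Hin (Ci * h)%C (Cmod_Ci_mult h)).
  pose proof (Hin (- (Ci * h))%C ltac:(now rewrite Cmod_opp, Cmod_Ci_mult)).
  unfold discrete_laplacian in Hpos.
  change (p - h)%C with (p + - h)%C in Hpos.
  change (p - Ci * h)%C with (p + - (Ci * h))%C in Hpos. lra.
Qed.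

(* If |w z0| > B, then v = perturbed_Re w (conj (w z0)) a d with d small enough attains
   its maximum over the square neither inside nor on the boundary, where v is too small. *)
Lemma maximum_modulus_square (w : C -> C) (a : C) (r B : R) :
  0 < r ->
  (forall p, sup_norm (p - a) <= r -> expandable2 w p) ->
  (forall z, sup_norm (z - a) = r -> Cmod (w z) <= B) ->
  forall z, sup_norm (z - a) <= r -> Cmod (w z) <= B.
Proof.
  intros Hr Hw Hbd z0 Hz0. apply Rnot_lt_le. intro Hgt.
  assert (HB : 0 <= B).
  { eapply Rle_trans; [apply Cmod_ge_0 | apply (Hbd (a + RtoC r)%C)].
    replace (a + RtoC r - a)%C with (RtoC r) by (apply injective_projections; simpl; ring).
    unfold sup_norm. simpl. rewrite Rabs_R0, Rabs_pos_eq, Rmax_left; lra. }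
  set (c := Cconj (w z0)). set (nW := Cmod (w z0)).
  set (d := nW * (nW - B) / (8 * r ^ 2)).
  assert (Hd : 0 < d).
  { apply Rdiv_lt_0_compat; [apply Rmult_lt_0_compat|]; unfold nW in *; try lra.
    pose proof (pow_lt r 2 Hr). lra. }
  destruct (continuous_argmax_square (perturbed_Re w c a d) a r) as [p [Hp Hmax]]; [lra| |].
  { intros p Hp. apply continuous_perturbed_Re, Hw, Hp. }
  destruct (Rle_lt_or_eq_dec _ _ Hp) as [Hint|Hedge].
  { exact (perturbed_Re_no_interior_max w c a p d r (Hw p Hp) Hd Hint Hmax). }
  assert (Hvz0 : nW ^ 2 <= perturbed_Re w c a d z0).
  { unfold perturbed_Re, c, nW. rewrite Cmult_comm, <- Cmod2_conj. simpl.
    pose proof (pow2_ge_0 (Cmod (z0 - a))). nra. }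
  assert (Hvp : perturbed_Re w c a d p <= nW * B + d * (2 * r) ^ 2).
  { apply Rplus_le_compat.
    - eapply Rle_trans; [apply Rle_abs|]. eapply Rle_trans; [apply re_le_Cmod|].
      unfold c. rewrite Cmod_mult, Cmod_conj.
      apply Rmult_le_compat_l; [apply Cmod_ge_0 | apply Hbd, Hedge].
    - apply Rmult_le_compat_l; [lra|]. apply pow_incr. split; [apply Cmod_ge_0|].
      rewrite <- Hedge. apply Cmod_le_sup_norm. }
  replace (d * (2 * r) ^ 2) with (nW * (nW - B) / 2) in Hvp by (unfold d; field; lra).
  pose proof (Hmax z0 Hz0). unfold nW in *. nra.
Qed.

(** * Growth near a zero of finite order *)

Lemma zero_of_order_square_bound (f : C -> C) (D : nat -> C -> C) (a : C) (m : nat) (r B : R) :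
  cderivs f D -> (forall j, (j < m)%nat -> D j a = 0%C) -> 0 < r ->
  (forall z, sup_norm (z - a) = r -> Cmod (f z) <= B) ->
  forall z, sup_norm (z - a) <= r -> Cmod (f z) <= B / r ^ m * Cmod (z - a) ^ m.
Proof.
  intros Hf Hzero Hr Hbd z Hz.
  set (w := zero_quotient f D a m).
  assert (Hwbd : forall z, sup_norm (z - a) = r -> Cmod (w z) <= B / r ^ m).
  { intros u Hu. pose proof (Hbd u Hu) as Hfu.
    rewrite (zero_quotient_factor f D a m Hf Hzero u), Cmod_mult, Cmod_pow in Hfu.
    fold w in Hfu.
    assert (Hua : r <= Cmod (u - a)) by (rewrite <- Hu; apply sup_norm_le_Cmod).
    assert (Hrm : r ^ m <= Cmod (u - a) ^ m) by (apply pow_incr; lra).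
    pose proof (pow_lt r m Hr). pose proof (Cmod_ge_0 (w u)).
    apply (Rmult_le_reg_r (r ^ m)); [lra|]. unfold Rdiv.
    rewrite Rmult_assoc, Rinv_l, Rmult_1_r by lra. nra. }
  pose proof (maximum_modulus_square w a r (B / r ^ m) Hr
                (fun p _ => expandable2_zero_quotient f D a m Hf Hzero p) Hwbd z Hz) as Hwz.
  rewrite (zero_quotient_factor f D a m Hf Hzero z), Cmod_mult, Cmod_pow. fold w.
  apply Rmult_le_compat_r; [apply pow_le, Cmod_ge_0 | exact Hwz].
Qed.

Lemma growth_constant_nonneg (f : C -> C) (eps M : R) :
  (forall z, Cmod (f z) <= M * exp (eps * Cmod z)) -> 0 <= M.
Proof.
  intro HM. specialize (HM 0%C). rewrite Cmod_0, Rmult_0_r, exp_0, Rmult_1_r in HM.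
  pose proof (Cmod_ge_0 (f 0%C)). lra.
Qed.

Lemma zero_of_order_growth_bound (f : C -> C) (D : nat -> C -> C) (a b : C) (m : nat)
  (eps M : R) :
  cderivs f D -> (forall j, (j < m)%nat -> D j a = 0%C) -> 0 <= eps ->
  (forall z, Cmod (f z) <= M * exp (eps * Cmod z)) -> Cmod (b - a) <= 1 ->
  Cmod (f b) <= M * exp (eps * (Cmod a + 2)) * Cmod (b - a) ^ m.
Proof.
  intros Hf Hzero Heps HM Hb. pose proof (growth_constant_nonneg f eps M HM) as HM0.
  pose proof (zero_of_order_square_bound f D a m 1 (M * exp (eps * (Cmod a + 2))) Hf Hzero
                Rlt_0_1) as Hsq.
  rewrite pow1, Rdiv_1_r in Hsq. apply Hsq.
  - intros z Hz. eapply Rle_trans; [apply HM|]. apply Rmult_le_compat_l; [exact HM0|].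
    apply exp_le_compat, Rmult_le_compat_l; [exact Heps|].
    replace z with (a + (z - a))%C at 1 by (apply injective_projections; simpl; ring).
    eapply Rle_trans; [apply Cmod_triangle|].
    pose proof (Cmod_le_sup_norm (z - a)). lra.
  - eapply Rle_trans; [apply sup_norm_le_Cmod | exact Hb].
Qed.

Lemma pow_le_of_lt_root (x q y : R) (m : nat) :
  0 <= x -> 0 < q <= 1 -> (1 <= m)%nat -> x < q * exp (y / INR m) -> x ^ m <= q * exp y.
Proof.
  intros Hx Hq Hm Hlt.
  assert (Hroot : exp (y / INR m) ^ m = exp y).
  { rewrite <- Rpower_pow by apply exp_pos. unfold Rpower. rewrite ln_exp.
    f_equal. field. apply not_0_INR. lia. }
  assert (Hqm : q ^ m <= q).
  { destruct m as [|m]; [lia|]. simpl.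
    assert (q ^ m <= 1) by (rewrite <- (pow1 m); apply pow_incr; lra). nra. }
  eapply Rle_trans; [apply pow_incr; split; [exact Hx | left; exact Hlt]|].
  rewrite Rpow_mult_distr, Hroot. apply Rmult_le_compat_r; [left; apply exp_pos | exact Hqm].
Qed.

Lemma exp_neg_div_le_1 (x : R) (m : nat) : 0 <= x -> (1 <= m)%nat -> exp (- x / INR m) <= 1.
Proof.
  intros Hx Hm. rewrite <- exp_0. apply exp_le_compat. unfold Rdiv.
  assert (0 < / INR m) by (apply Rinv_0_lt_compat, lt_0_INR; lia). nra.
Qed.

Lemma one_near_zero_of_order_bound (f : C -> C) (D : nat -> C -> C) (a b : C) (m : nat)
  (eps M q : R) :
  cderivs f D -> (forall j, (j < m)%nat -> D j a = 0%C) -> (1 <= m)%nat -> 0 < eps ->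
  (forall z, Cmod (f z) <= M * exp (eps * Cmod z)) -> f b = 1%C -> 0 < q <= 1 ->
  Cmod (a - b) < q * exp (- (eps * Cmod a) / INR m) ->
  1 <= M * exp (2 * eps) * q.
Proof.
  intros Hf Hzero Hm Heps HM Hb Hq Hclose.
  rewrite <- Cmod_opp in Hclose.
  replace (- (a - b))%C with (b - a)%C in Hclose by (apply injective_projections; simpl; ring).
  assert (Hroot : exp (- (eps * Cmod a) / INR m) <= 1)
    by (apply exp_neg_div_le_1; [apply Rmult_le_pos; [lra | apply Cmod_ge_0] | exact Hm]).
  pose proof (zero_of_order_growth_bound f D a b m eps M Hf Hzero (Rlt_le _ _ Heps) HM)
    as Hbound.
  rewrite Hb, Cmod_1 in Hbound.
  pose proof (pow_le_of_lt_root _ _ _ m (Cmod_ge_0 (b - a)) Hq Hm Hclose) as Hpow.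
  assert (HM0 : 0 <= M * exp (eps * (Cmod a + 2)))
    by (apply Rmult_le_pos; [apply (growth_constant_nonneg f eps M HM) | left; apply exp_pos]).
  eapply Rle_trans; [apply Hbound; pose proof (exp_pos (- (eps * Cmod a) / INR m)); nra|].
  eapply Rle_trans; [apply Rmult_le_compat_l; [exact HM0 | exact Hpow]|].
  right. replace (eps * (Cmod a + 2)) with (2 * eps + eps * Cmod a) by ring.
  rewrite exp_plus.
  replace (M * (exp (2 * eps) * exp (eps * Cmod a)) * (q * exp (- (eps * Cmod a))))
    with (M * exp (2 * eps) * q * (exp (eps * Cmod a) * exp (- (eps * Cmod a)))) by ring.
  rewrite <- exp_plus, Rplus_opp_r, exp_0. ring.
Qed.

(** * Separation *)

Lemma finite_uniform_pos (Q : nat -> R -> Prop) :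
  (forall n, exists r, 0 < r /\ Q n r) -> (forall n r r', 0 < r' <= r -> Q n r -> Q n r') ->
  forall N, exists r, 0 < r /\ forall n, (n < N)%nat -> Q n r.
Proof.
  intros HQ Hmono N. induction N as [|N [r [Hr IH]]].
  - exists 1. split; [lra | intros; lia].
  - destruct (HQ N) as [r' [Hr' HN]]. exists (Rmin r r'). split; [now apply Rmin_pos|].
    intros n Hn. destruct (Nat.eq_dec n N) as [->|Hne].
    + apply (Hmono N r'); [split; [now apply Rmin_pos | apply Rmin_r] | exact HN].
    + apply (Hmono n r); [split; [now apply Rmin_pos | apply Rmin_l] | apply IH; lia].
Qed.

Lemma escaping_sequence {A : Type} (g : A -> R) (Q : nat -> A -> Prop) :
  (forall T j, exists x, T < g x /\ Q j x) ->
  exists s : nat -> A, (forall j, Q j (s j)) /\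
    forall i j, (i < j)%nat -> g (s i) + 1 < g (s j).
Proof.
  intro Hesc.
  destruct (choice (fun (Tj : R * nat) x => fst Tj < g x /\ Q (snd Tj) x)) as [pick Hpick].
  { intros [T j]. apply Hesc. }
  set (s := fix s (j : nat) : A :=
         match j with O => pick (0, O) | S i => pick (g (s i) + 1, S i) end).
  assert (Hstep : forall j, g (s j) + 1 < g (s (S j))) by (intro j; apply (Hpick (_, _))).
  exists s. split.
  - intros [|j]; apply (Hpick (_, _)).
  - intros i j Hij. induction Hij as [|j Hij IH]; [apply Hstep|].
    specialize (Hstep j). lra.
Qed.

Section Separation.

Variable lam : nat -> C.
Hypothesis lam_inj : forall n k, n <> k -> lam n <> lam k.
Hypothesis lam_unbounded : forall M, exists N, forall n, (N <= n)%nat -> M < Cmod (lam n).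

Lemma separated_point (n : nat) :
  exists r, 0 < r /\ forall k, k <> n -> r <= Cmod (lam n - lam k).
Proof.
  destruct (lam_unbounded (Cmod (lam n) + 1)) as [N HN].
  assert (HQ : forall k, exists r, 0 < r /\ (k <> n -> r <= Cmod (lam n - lam k))).
  { intro k. destruct (Nat.eq_dec k n) as [->|Hkn]; [exists 1; split; [lra | tauto]|].
    exists (Cmod (lam n - lam k)). split; [|intros; lra].
    apply Cmod_gt_0, Cminus_neq_0, lam_inj. auto. }
  destruct (finite_uniform_pos _ HQ) with (N := N) as [r [Hr Hsep]].
  { intros k r0 r0' [_ Hle] H Hk. specialize (H Hk). lra. }
  exists (Rmin r 1). split; [apply Rmin_pos; lra|]. intros k Hk.
  destruct (Nat.lt_ge_cases k N) as [HkN|HkN].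
  - eapply Rle_trans; [apply Rmin_l | now apply Hsep].
  - specialize (HN k HkN). pose proof (Cmod_sub_ge (lam k) (lam n)).
    replace (lam n - lam k)%C with (- (lam k - lam n))%C
      by (apply injective_projections; simpl; ring).
    rewrite Cmod_opp. pose proof (Rmin_r r 1). lra.
Qed.

Lemma separated_initial_segment (N : nat) :
  exists r, 0 < r /\ forall n, (n < N)%nat -> forall k, k <> n -> r <= Cmod (lam n - lam k).
Proof.
  apply (finite_uniform_pos (fun n r => forall k, k <> n -> r <= Cmod (lam n - lam k))).
  - exact separated_point.
  - intros n r r' [_ Hle] H k Hk. specialize (H k Hk). lra.
Qed.

Variable rho : nat -> R.
Hypothesis rho_pos_le_1 : forall n, 0 < rho n <= 1.
Hypothesis not_separated :
  ~ exists m, 0 < m /\ forall n k, k <> n -> m * rho n <= Cmod (lam n - lam k).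

Lemma close_pair_far_out (T q : R) : 0 < q ->
  exists n k, k <> n /\ T < Cmod (lam n) /\ Cmod (lam n - lam k) < q * rho n.
Proof.
  intro Hq. destruct (lam_unbounded T) as [N HN].
  destruct (separated_initial_segment N) as [m0 [Hm0 Hsep]].
  apply NNPP. intro Hno. apply not_separated. exists (Rmin m0 q).
  split; [now apply Rmin_pos|]. intros n k Hkn. apply Rnot_lt_le. intro Hlt.
  pose proof (rho_pos_le_1 n). pose proof (Rmin_l m0 q). pose proof (Rmin_r m0 q).
  assert (0 < Rmin m0 q) by now apply Rmin_pos.
  destruct (Nat.lt_ge_cases n N) as [HnN|HnN].
  - specialize (Hsep n HnN k Hkn). nra.
  - apply Hno. exists n, k. repeat split; [exact Hkn | now apply HN | nra].
Qed.

(* Consecutive pairs are chosen with |lam (nn j)| growing by more than 1, so that no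
   nn i can be a kk j: that would put lam (nn i) within distance 1 of lam (nn j). *)
Lemma close_pairs_sequence :
  exists nn kk : nat -> nat, (forall i j, nn i <> kk j) /\
    forall j, Cmod (lam (nn j) - lam (kk j)) < / INR (S j) * rho (nn j).
Proof.
  destruct (escaping_sequence (fun x => Cmod (lam (fst x)))
              (fun j x => snd x <> fst x /\
                          Cmod (lam (fst x) - lam (snd x)) < / INR (S j) * rho (fst x)))
    as [s [Hs Hgrow]].
  { intros T j.
    destruct (close_pair_far_out T (/ INR (S j)) (proj1 (inv_INR_S_bounds j)))
      as [n [k [Hkn [HT Hclose]]]].
    exists (n, k). simpl. auto. }
  exists (fun j => fst (s j)), (fun j => snd (s j)).
  assert (Hclose : forall j, Cmod (lam (fst (s j)) - lam (snd (s j))) < 1).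
  { intro j. destruct (Hs j) as [_ H]. pose proof (rho_pos_le_1 (fst (s j))).
    pose proof (inv_INR_S_bounds j). nra. }
  split.
  - intros i j E. destruct (Nat.eq_dec i j) as [->|Hij]; [now apply (Hs j)|].
    specialize (Hclose j). rewrite <- E in Hclose.
    pose proof (Cmod_sub_ge (lam (fst (s j))) (lam (fst (s i)))) as Hji.
    pose proof (Cmod_sub_ge (lam (fst (s i))) (lam (fst (s j)))) as Hij'.
    replace (lam (fst (s i)) - lam (fst (s j)))%C
      with (- (lam (fst (s j)) - lam (fst (s i))))%C in Hij'
      by (apply injective_projections; simpl; ring).
    rewrite Cmod_opp in Hij'.
    destruct (proj1 (Nat.lt_gt_cases i j) Hij) as [Hlt|Hlt];
      specialize (Hgrow _ _ Hlt); simpl in Hgrow; lra.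
  - intro j. apply (Hs j).
Qed.

End Separation.

Lemma sum_f_R0_first (g : nat -> R) (N : nat) :
  (forall i, (1 <= i)%nat -> g i = 0) -> sum_f_R0 g N = g 0%nat.
Proof.
  intro Hg. induction N as [|N IH]; [reflexivity|].
  simpl. rewrite IH, (Hg (S N)) by lia. ring.
Qed.

Definition indicator_data (P : nat -> Prop) (n k : nat) : C :=
  if excluded_middle_informative (P n) then (match k with O => 1 | _ => 0 end)%C else 0%C.

Lemma indicator_data_admissible (lam : nat -> C) (mu : nat -> nat) (P : nat -> Prop) :
  admissible_data lam mu (indicator_data P).
Proof.
  intros eps Heps. exists 1. intro n.
  rewrite (sum_f_R0_first (fun k => Cmod (indicator_data P n k))).
  2: { intros [|k] Hk; [lia|]. unfold indicator_data.
       destruct (excluded_middle_informative _); apply Cmod_0. }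
  assert (H1 : Cmod (indicator_data P n 0) <= 1).
  { unfold indicator_data. destruct (excluded_middle_informative _);
      [rewrite Cmod_1 | rewrite Cmod_0]; lra. }
  assert (Hexp : exp (- eps * Cmod (lam n)) <= 1).
  { rewrite <- exp_0. apply exp_le_compat. pose proof (Cmod_ge_0 (lam n)). nra. }
  pose proof (Cmod_ge_0 (indicator_data P n 0)). pose proof (exp_pos (- eps * Cmod (lam n))).
  nra.
Qed.

Lemma indicator_interpolant (lam : nat -> C) (mu : nat -> nat) (P : nat -> Prop)
  (f : C -> C) (D : nat -> C -> C) :
  (forall n, (1 <= mu n)%nat) -> cderivs f D ->
  (forall n k : nat, (k < mu n)%nat ->
     Cdiv (D k (lam n)) (RtoC (INR (Factorial.fact k))) = indicator_data P n k) ->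
  (forall n, P n -> f (lam n) = 1%C) /\
  (forall n, ~ P n -> forall i, (i < mu n)%nat -> D i (lam n) = 0%C).
Proof.
  intros Hmu [HD0 _] Hinterp. split.
  - intros n Pn. specialize (Hinterp n 0%nat (Hmu n)). unfold indicator_data in Hinterp.
    destruct (excluded_middle_informative (P n)) as [_|]; [|contradiction].
    rewrite <- HD0, <- Hinterp. simpl. apply injective_projections; simpl; field.
  - intros n Pn i Hi. specialize (Hinterp n i Hi). unfold indicator_data in Hinterp.
    destruct (excluded_middle_informative (P n)) as [|_]; [contradiction|].
    replace (D i (lam n)) with (D i (lam n) / INR (fact i) * INR (fact i))%C
      by (field; apply RtoC_INR_fact_neq_0).
    rewrite Hinterp. apply Cmult_0_l.
Qed.

Theorem lemma2p1 (lam : nat -> C) (mu : nat -> nat) :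
  multiplicity_sequence lam mu ->
  interpolating_variety lam mu ->
  forall eps : R, 0 < eps ->
    exists m : R, 0 < m /\
      forall n k : nat, k <> n ->
        m * exp (- (eps * Cmod (lam n)) / INR (mu n)) <= Cmod (Cminus (lam n) (lam k)).
Proof.
  intros [Hinj [_ [Hunb [_ Hmu]]]] HI eps Heps.
  set (rho := fun n => exp (- (eps * Cmod (lam n)) / INR (mu n))).
  assert (Hrho : forall n, 0 < rho n <= 1).
  { intro n. split; [apply exp_pos|].
    apply exp_neg_div_le_1; [apply Rmult_le_pos; [lra | apply Cmod_ge_0] | apply Hmu]. }
  apply NNPP. intro Hneg.
  destruct (close_pairs_sequence lam Hinj Hunb rho Hrho Hneg) as [nn [kk [Hdisj Hclose]]].
  set (P := fun n => exists j, kk j = n).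
  destruct (HI _ (indicator_data_admissible lam mu P)) as [f [[_ Hgrowth] [D [HD Hinterp]]]].
  destruct (indicator_interpolant lam mu P f D Hmu HD Hinterp) as [Hone Hzero].
  destruct (Hgrowth eps Heps) as [M HM].
  destruct (INR_unbounded (M * exp (2 * eps))) as [J HJ].
  assert (Hnn : ~ P (nn J)) by (intros [j Hj]; exact (Hdisj J j (eq_sym Hj))).
  pose proof (one_near_zero_of_order_bound f D (lam (nn J)) (lam (kk J)) (mu (nn J))
                eps M (/ INR (S J)) HD (Hzero (nn J) Hnn) (Hmu (nn J)) Heps HM
                (Hone (kk J) (ex_intro _ J eq_refl)) (inv_INR_S_bounds J) (Hclose J)) as Hbad.
  assert (HSJ : 0 < INR (S J)) by (apply lt_0_INR; lia).
  apply (Rmult_le_compat_r (INR (S J))) in Hbad; [|lra].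
  rewrite Rmult_assoc, Rinv_l, Rmult_1_r, S_INR in Hbad by lra. lra.
Qed.
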